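(* Let $\gamma\geq0$ and $G=(V,E,\omega)\in\mathcal C_\gamma$, and assume $r=0$. Define, for $i,j\in V$, $\tilde\omega_{ij}:=-d_j^r\sum_{m=1}^{n-1}\Lambda_m\phi^m_i\phi^m_j$ if $i\neq j$ and $\tilde\omega_{ii}:=0$. Let $\tilde E\subset V^2$ contain the undirected edge $(i,j)$ if and only if $\tilde\omega_{ij}>0$. Then $\tilde G=(V,\tilde E,\tilde\omega)\in\mathcal G$. Moreover, if $\tilde\Delta$ denotes the graph Laplacian on $\tilde G$ with parameter $\tilde r=0$, i.e. $(\tilde\Delta u)_i=\sum_{j}\tilde\omega_{ij}(u_i-u_j)$, then $\tilde\Delta=L$.
   Context: $\mathcal{G}$ is the set of finite, simple, connected, undirected, edge-weighted graphs $G=(V,E,\omega)$ with $V=\{1,\dots,n\}$, $n\geq2$, weights $\omega_{ij}=\omega_{ji}>0$ for $(i,j)\in E$ and $\omega_{ij}=0$ otherwise. $d_i=\sum_j\omega_{ij}$. $\mathcal V$: functions $V\to\mathbb R$. With parameter $r\in[0,1]$: $\langle u,v\rangle_{\mathcal V}=\sum_id_i^ru_iv_i$, $(\Delta u)_i=d_i^{-r}\sum_j\omega_{ij}(u_i-u_j)$, $\mathcal M(u)=\sum_id_i^ru_i$, $\mathrm{vol}(V)=\sum_id_i^r$, $\mathcal A(u)=\frac{\mathcal M(u)}{\mathrm{vol}(V)}\chi_V$ ($\chi_S$ is the indicator of $S$). For $u\in\mathcal V$, let $\varphi$ be the unique solution of $\Delta\varphi=u-\mathcal A(u)$, $\mathcal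 M(\varphi)=0$, and $Lu:=\Delta u+\gamma\varphi$. Let $0=\lambda_0<\lambda_1\leq\dots\leq\lambda_{n-1}$ be the eigenvalues of $\Delta$ with $\langle\cdot,\cdot\rangle_{\mathcal V}$-orthonormal eigenfunctions $\phi^0=\mathrm{vol}(V)^{-1/2}\chi_V,\phi^1,\dots,\phi^{n-1}$, and $\Lambda_0=0$, $\Lambda_m=\lambda_m+\gamma/\lambda_m$ ($m\geq1$). Equilibrium measure: for a proper subset $S\subsetneq V$, $\nu^S$ is the unique $\nu\in\mathcal V$ with $(\Delta\nu)_i=1$ for $i\in S$ and $\nu_i=0$ for $i\notin S$. For $j\in V$, $f^j:=\nu^{V\setminus\{j\}}-\mathcal A(\nu^{V\setminus\{j\}})$. Classes: $\mathcal C^0=\{G\in\mathcal G:\forall j\in V\ \forall i\in V\setminus\{j\}:\ \omega_{ij}>0\text{ or }f^j_i\geq0\}$; for $\gamma>0$, $\mathcal C_\gamma=\{G\in\mathcal C^0:\forall j\ \forall i\neq j:\ \omega_{ij}=0\text{ or }d_i^{-r}\omega_{ij}+\gamma\frac{d_j^r}{\mathrm{vol}(V)}f^j_i>0\}$; and $\mathcal C_0:=\mathcal G$. *)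

From HB Require Import structures.
From mathcomp Require Import all_boot all_order all_algebra.
From mathcomp Require Import all_classical all_reals.
From mathcomp Require Import exp.
Set Implicit Arguments. Unset Strict Implicit. Unset Printing Implicit Defensive.
Import Order.TTheory GRing.Theory Num.Theory.
Local Open Scope ring_scope.

Section GraphDefs.
Variables (R : realType) (n : nat).

(* Vertex set V = {0,...,n-1} = 'I_n; an edge-weighted graph is given by its
   weight function w; the edge set is E = {(i,j) | w i j > 0}. *)
Definition weight := 'I_n -> 'I_n -> R.
Definition vfun := 'I_n -> R.

Definition is_graph (w : weight) : Prop :=
  [/\ (2 <= n)%N,
      (forall i j, w i j = w j i),
      (forall i, w i i = 0),
      (forall i j, 0 <= w i j) &
      (forall i j, connect (fun a b => 0 < w a b) i j)].

Definition deg (w : weight) (i : 'I_n) : R := \sum_(j < n) w i j.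

Definition degr (r : R) (w : weight) (i : 'I_n) : R := (deg w i) `^ r.

Definition inner (r : R) (w : weight) (u v : vfun) : R :=
  \sum_(i < n) degr r w i * u i * v i.

Definition lap (r : R) (w : weight) (u : vfun) : vfun :=
  fun i => (degr r w i)^-1 * \sum_(j < n) w i j * (u i - u j).

Definition mass (r : R) (w : weight) (u : vfun) : R :=
  \sum_(i < n) degr r w i * u i.

Definition vol (r : R) (w : weight) : R := \sum_(i < n) degr r w i.

Definition avg (r : R) (w : weight) (u : vfun) : vfun :=
  fun _ => mass r w u / vol r w.

Definition is_potential (r : R) (w : weight) (u phi : vfun) : Prop :=
  (forall i, lap r w phi i = u i - avg r w u i) /\ mass r w phi = 0.

Definition potential (r : R) (w : weight) (u : vfun) : vfun :=
  xget (fun _ => 0) [set phi | is_potential r w u phi].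

Definition Lop (r gamma : R) (w : weight) (u : vfun) : vfun :=
  fun i => lap r w u i + gamma * potential r w u i.

Definition is_eqmeasure (r : R) (w : weight) (S : {set 'I_n}) (nu : vfun) : Prop :=
  (forall i, i \in S -> lap r w nu i = 1) /\ (forall i, i \notin S -> nu i = 0).

Definition eqmeasure (r : R) (w : weight) (S : {set 'I_n}) : vfun :=
  xget (fun _ => 0) [set nu | is_eqmeasure r w S nu].

Definition fj (r : R) (w : weight) (j : 'I_n) : vfun :=
  fun i => eqmeasure r w [set~ j] i - avg r w (eqmeasure r w [set~ j]) i.

Definition inC0 (r : R) (w : weight) : Prop :=
  is_graph w /\
  forall j i : 'I_n, i != j -> 0 < w i j \/ 0 <= fj r w j i.

Definition inCgamma (r gamma : R) (w : weight) : Prop :=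
  if gamma == 0 then is_graph w
  else inC0 r w /\
       forall j i : 'I_n, i != j ->
         w i j = 0 \/
         0 < (degr r w i)^-1 * w i j + gamma * (degr r w j / vol r w) * fj r w j i.

Definition bigLambda (gamma : R) (lam : 'I_n -> R) (m : 'I_n) : R :=
  if (m == 0 :> nat) then 0 else lam m + gamma / lam m.

Definition is_spectral (r : R) (w : weight) (lam : 'I_n -> R) (phi : 'I_n -> vfun) : Prop :=
  [/\ (forall m : 'I_n, (m == 0 :> nat) -> lam m = 0 /\ phi m = (fun _ => (Num.sqrt (vol r w))^-1)),
      (forall m : 'I_n, (0 < m)%N -> 0 < lam m),
      (forall m k : 'I_n, (m <= k)%N -> lam m <= lam k),
      (forall m i, lap r w (phi m) i = lam m * phi m i) &
      (forall m k, inner r w (phi m) (phi k) = (m == k)%:R)].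

Definition wtilde (r gamma : R) (w : weight) (lam : 'I_n -> R) (phi : 'I_n -> vfun) : weight :=
  fun i j => if i == j then 0
    else - (degr r w j * \sum_(m < n | (0 < m)%N) bigLambda gamma lam m * phi m i * phi m j).

End GraphDefs.

From HB Require Import structures.
From mathcomp Require Import all_boot all_order all_algebra.
From mathcomp Require Import all_classical all_reals.
From mathcomp Require Import exp.
From mathcomp Require Import ring.
Import Order.TTheory GRing.Theory Num.Theory.
Local Open Scope ring_scope.

(* At r = 0 every weight d_i^r is 1, and the orthonormal eigenbasis phi^m
   diagonalises Delta. Hence the potential of u is
   sum_{m>0} <phi^m, u> / lambda_m phi^m, and L u = sum_m Lambda_m <phi^m, u> phi^m:
   L is the symmetric matrix K_ik = sum_m Lambda_m phi^m_i phi^m_k, whose rows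
   sum to 0 because Lambda_0 = 0 and every phi^m with m > 0 is orthogonal to the
   constants. A matrix with zero row sums is the Laplacian of the weights -K_ik,
   which are the weights of wtilde. Applying L to the indicator of j gives
   wtilde_ij = w_ij - gamma phi(chi_j)_i, and solving for the equilibrium
   measure, nu^{V\{j}} = n (phi(chi_j)_j - phi(chi_j)), gives f^j = -n phi(chi_j).
   So wtilde_ij = w_ij + gamma / n f^j_i, which the class C_gamma makes
   nonnegative, and positive on the edges of G; so G~ inherits connectivity. *)

Set Implicit Arguments. Unset Strict Implicit.

Lemma sum_mul_eq (R : pzSemiRingType) n (F : 'I_n -> R) k :
  \sum_m F m * (m == k)%:R = F k.
Proof.
rewrite (bigD1 k) //= eqxx mulr1 big1 ?addr0 // => m /negbTE ->.
by rewrite mulr0.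
Qed.

Section OrthonormalBasis.
Variables (R : comUnitRingType) (n : nat) (phi : 'I_n -> 'I_n -> R).
Hypothesis phi_orthonormal : forall m k, \sum_i phi m i * phi k i = (m == k)%:R.

Lemma phi_complete i j : \sum_m phi m i * phi m j = (i == j)%:R.
Proof.
pose P : 'M[R]_n := \matrix_(m, i) phi m i.
have /mulmx1C/matrixP/(_ i j) : P *m P^T = 1%:M.
  apply/matrixP => m k; rewrite !mxE -phi_orthonormal.
  by apply: eq_bigr => l _; rewrite !mxE.
by rewrite !mxE => <-; apply: eq_bigr => l _; rewrite !mxE.
Qed.

Definition ortho_coord (u : 'I_n -> R) m := \sum_k phi m k * u k.

Lemma ortho_expansion u i : u i = \sum_m ortho_coord u m * phi m i.
Proof.
transitivity (\sum_k u k * \sum_m phi m k * phi m i).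
  by under eq_bigr do rewrite phi_complete; rewrite sum_mul_eq.
under [RHS]eq_bigr do rewrite /ortho_coord mulr_suml.
rewrite exchange_big; apply: eq_bigr => k _; rewrite mulr_sumr.
by apply: eq_bigr => m _; ring.
Qed.

Lemma ortho_coord_sum (a : 'I_n -> R) k :
  ortho_coord (fun i => \sum_m a m * phi m i) k = a k.
Proof.
transitivity (\sum_m a m * \sum_i phi k i * phi m i).
  rewrite /ortho_coord; under eq_bigr do rewrite mulr_sumr.
  rewrite exchange_big; apply: eq_bigr => m _; rewrite mulr_sumr.
  by apply: eq_bigr => i _; ring.
by under eq_bigr do rewrite phi_orthonormal eq_sym; rewrite sum_mul_eq.
Qed.

End OrthonormalBasis.

Section Laplacian.
Variables (R : realType) (n : nat) (w : weight R n).

Lemma degr0 i : degr 0 w i = 1.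
Proof. by rewrite /degr powRr0. Qed.

Lemma lap0E u i : lap 0 w u i = \sum_j w i j * (u i - u j).
Proof. by rewrite /lap degr0 invr1 mul1r. Qed.

Lemma mass0E u : mass 0 w u = \sum_i u i.
Proof. by apply: eq_bigr => i _; rewrite degr0 mul1r. Qed.

Lemma vol0E : vol 0 w = n%:R.
Proof.
rewrite /vol (eq_bigr (fun _ => 1)) => [|i _]; last by rewrite degr0.
by rewrite sumr_const card_ord.
Qed.

Lemma inner0E u v : inner 0 w u v = \sum_i u i * v i.
Proof. by apply: eq_bigr => i _; rewrite degr0 mul1r. Qed.

Lemma lapB r f g i :
  lap r w (fun k => f k - g k) i = lap r w f i - lap r w g i.
Proof.
rewrite /lap -mulrBr -sumrB; congr (_ * _).
by apply: eq_bigr => j _; ring.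
Qed.

Lemma lapZ r a f i : lap r w (fun k => a * f k) i = a * lap r w f i.
Proof.
rewrite /lap [RHS]mulrCA; congr (_ * _); rewrite mulr_sumr.
by apply: eq_bigr => j _; ring.
Qed.

Lemma lap_subr r a f i : lap r w (fun k => f k - a) i = lap r w f i.
Proof. by rewrite /lap; congr (_ * _); apply: eq_bigr => j _; ring. Qed.

Lemma sum_lap0 u : (forall i j, w i j = w j i) -> \sum_i lap 0 w u i = 0.
Proof.
move=> w_sym; under eq_bigr do rewrite lap0E.
transitivity (\sum_i \sum_k w i k * u i - \sum_i \sum_k w i k * u k).
  rewrite -sumrB; apply: eq_bigr => i _; rewrite -sumrB.
  by apply: eq_bigr => k _; ring.
rewrite [X in _ - X]exchange_big /=; apply/eqP; rewrite subr_eq0; apply/eqP.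
by apply: eq_bigr => i _; apply: eq_bigr => k _; rewrite w_sym.
Qed.

End Laplacian.

Section Spectral.
Variables (R : realType) (n : nat) (w : weight R n).
Variables (lam : 'I_n -> R) (phi : 'I_n -> vfun R n).
Hypothesis spec : is_spectral 0 w lam phi.
Hypothesis n_gt0 : (0 < n)%N.
Variable gamma : R.

Let m0 : 'I_n := Ordinal n_gt0.

Lemma lam0 : lam m0 = 0.
Proof. by case: spec => /(_ m0 erefl)[]. Qed.

Lemma phi0E : phi m0 = fun=> (Num.sqrt n%:R)^-1.
Proof. by case: spec => /(_ m0 erefl)[_]; rewrite vol0E. Qed.

Lemma lam_gt0 m : m != m0 -> 0 < lam m.
Proof.
case: spec => _ lam_pos _ _ _ m_neq0; apply: lam_pos; rewrite lt0n.
by apply: contra m_neq0 => /eqP m_eq0; apply/eqP/val_inj.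
Qed.

Lemma phi_orthonormal m k : \sum_i phi m i * phi k i = (m == k)%:R.
Proof. by case: spec => _ _ _ _ <-; rewrite inner0E. Qed.

Lemma lap_phi m i : lap 0 w (phi m) i = lam m * phi m i.
Proof. by case: spec => _ _ _ ->. Qed.

Lemma phi0_sqr i j : phi m0 i * phi m0 j = n%:R^-1.
Proof. by rewrite phi0E -expr2 exprVn sqr_sqrtr ?ler0n. Qed.

Lemma sum_phi_eq0 m : m != m0 -> \sum_i phi m i = 0.
Proof.
move=> m_neq0; have := phi_orthonormal m0 m.
rewrite eq_sym (negbTE m_neq0) phi0E -mulr_sumr => /eqP.
by rewrite mulf_eq0 invr_eq0 sqrtr_eq0 leNgt ltr0n n_gt0 => /eqP.
Qed.

Lemma ortho_coord0_phi0 u i : ortho_coord phi u m0 * phi m0 i = (\sum_k u k) / n%:R.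
Proof.
rewrite /ortho_coord mulr_suml mulr_suml; apply: eq_bigr => k _.
by rewrite mulrAC phi0_sqr mulrC.
Qed.

Lemma lap_spectral u i :
  lap 0 w u i = \sum_m lam m * ortho_coord phi u m * phi m i.
Proof.
rewrite lap0E.
transitivity (\sum_j w i j * \sum_m ortho_coord phi u m * (phi m i - phi m j)).
  apply: eq_bigr => j _; congr (_ * _).
  rewrite {1}(ortho_expansion phi_orthonormal u i).
  rewrite (ortho_expansion phi_orthonormal u j) -sumrB.
  by apply: eq_bigr => m _; ring.
under eq_bigr do rewrite mulr_sumr.
rewrite exchange_big; apply: eq_bigr => m _.
transitivity (ortho_coord phi u m * lap 0 w (phi m) i).
  by rewrite lap0E mulr_sumr; apply: eq_bigr => j _; ring.
by rewrite lap_phi; ring.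
Qed.

Lemma lap_eq0_const u : (forall i, lap 0 w u i = 0) -> forall i j, u i = u j.
Proof.
move=> u_harmonic i j.
have coord_eq0 m : m != m0 -> ortho_coord phi u m = 0.
  move=> m_neq0.
  have := ortho_coord_sum phi_orthonormal (fun m => lam m * ortho_coord phi u m) m.
  rewrite /ortho_coord; under eq_bigr do rewrite -lap_spectral u_harmonic mulr0.
  rewrite big1 // => /esym/eqP; rewrite mulf_eq0 gt_eqF ?lam_gt0 //=.
  by move=> /eqP.
rewrite (ortho_expansion phi_orthonormal u i) (ortho_expansion phi_orthonormal u j).
apply: eq_bigr => m _; have [->|m_neq0] := eqVneq m m0; first by rewrite phi0E.
by rewrite coord_eq0 // !mul0r.
Qed.

(* The kernel component m0 drops out because lam m0 = 0 and 0^-1 = 0. *)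
Definition spectral_potential (u : vfun R n) : vfun R n :=
  fun i => \sum_m ortho_coord phi u m / lam m * phi m i.

Lemma spectral_potentialP u : is_potential 0 w u (spectral_potential u).
Proof.
split=> [i|].
  rewrite lap_spectral /avg mass0E vol0E -(ortho_coord0_phi0 u i).
  rewrite [u i](ortho_expansion phi_orthonormal u i) [in RHS](bigD1 m0) //=.
  rewrite addrAC subrr add0r [LHS](bigD1 m0) //= lam0 !mul0r add0r.
  apply: eq_bigr => m m_neq0.
  rewrite /spectral_potential (ortho_coord_sum phi_orthonormal).
  by rewrite mulrCA mulfV ?mulr1 // gt_eqF ?lam_gt0.
rewrite mass0E /spectral_potential exchange_big big1 // => m _.
rewrite -mulr_sumr; have [->|m_neq0] := eqVneq m m0.
  by rewrite lam0 invr0 mulr0 mul0r.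
by rewrite sum_phi_eq0 // mulr0.
Qed.

Lemma potentialE u : potential 0 w u = spectral_potential u.
Proof.
apply: xget_unique; first exact: spectral_potentialP.
move=> v [v_lap v_mass]; have [p_lap p_mass] := spectral_potentialP u.
set p := spectral_potential u in p_lap p_mass *.
have diff_const i j : v i - p i = v j - p j.
  apply: (@lap_eq0_const (fun k => v k - p k)) => k.
  by rewrite lapB v_lap p_lap subrr.
apply/funext => i; apply/subr0_eq.
have : \sum_k (v k - p k) = n%:R * (v i - p i).
  by rewrite (eq_bigr (fun=> v i - p i)) ?sumr_const ?card_ord ?mulr_natl.
rewrite sumrB -!(mass0E w) v_mass p_mass subrr => /esym/eqP.
by rewrite mulf_eq0 pnatr_eq0 gtn_eqF // => /eqP.
Qed.

Lemma potentialP u : is_potential 0 w u (potential 0 w u).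
Proof. by rewrite potentialE; exact: spectral_potentialP. Qed.

(* At m0 this also holds, with the junk value 0^-1 = 0. *)
Lemma bigLambdaE m : bigLambda gamma lam m = lam m + gamma / lam m.
Proof.
rewrite /bigLambda; case: eqP => // m_eq0.
have -> : m = m0 by exact: val_inj.
by rewrite lam0 invr0 mulr0 addr0.
Qed.

Lemma Lop_spectral u i :
  Lop 0 gamma w u i = \sum_m bigLambda gamma lam m * ortho_coord phi u m * phi m i.
Proof.
rewrite /Lop lap_spectral potentialE /spectral_potential.
rewrite mulr_sumr -big_split; apply: eq_bigr => m _ /=.
by rewrite bigLambdaE; ring.
Qed.

Definition Lkernel i k := \sum_m bigLambda gamma lam m * phi m i * phi m k.

Lemma Lop_Lkernel u i : Lop 0 gamma w u i = \sum_k Lkernel i k * u k.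
Proof.
rewrite Lop_spectral /Lkernel /ortho_coord.
under eq_bigr do rewrite mulr_sumr mulr_suml.
rewrite exchange_big; apply: eq_bigr => k _; rewrite mulr_suml.
by apply: eq_bigr => m _; ring.
Qed.

Lemma Lkernel_row_sum0 i : \sum_k Lkernel i k = 0.
Proof.
rewrite /Lkernel exchange_big big1 // => m _; rewrite -mulr_sumr.
have [->|m_neq0] := eqVneq m m0; first by rewrite /bigLambda /= !mul0r.
by rewrite sum_phi_eq0 // mulr0.
Qed.

Lemma wtilde_Lkernel i j : i != j -> wtilde 0 gamma w lam phi i j = - Lkernel i j.
Proof.
move=> i_neq_j; rewrite /wtilde (negbTE i_neq_j) degr0 mul1r big_mkcond /=.
congr (- _); apply: eq_bigr => m _; case: ifP => // /negbT.
by rewrite -eqn0Ngt /bigLambda => ->; rewrite !mul0r.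
Qed.

Lemma lap_wtilde u : lap 0 (wtilde 0 gamma w lam phi) u = Lop 0 gamma w u.
Proof.
apply/funext => i; rewrite lap0E Lop_Lkernel.
transitivity (\sum_k - Lkernel i k * (u i - u k)).
  apply: eq_bigr => k _; have [->|i_neq_k] := eqVneq i k.
    by rewrite !subrr !mulr0.
  by rewrite wtilde_Lkernel.
transitivity (\sum_k Lkernel i k * u k - u i * \sum_k Lkernel i k).
  by rewrite mulr_sumr -sumrB; apply: eq_bigr => k _; ring.
by rewrite Lkernel_row_sum0 mulr0 subr0.
Qed.

Definition delta (j : 'I_n) : vfun R n := fun k => (k == j)%:R.

Lemma lap_delta i j : i != j -> lap 0 w (delta j) i = - w i j.
Proof.
move=> i_neq_j; rewrite lap0E /delta (negbTE i_neq_j).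
by under eq_bigr do rewrite sub0r mulrN; rewrite sumrN sum_mul_eq.
Qed.

Lemma Lkernel_offdiag i j : i != j ->
  Lkernel i j = - w i j + gamma * potential 0 w (delta j) i.
Proof.
move=> i_neq_j; transitivity (Lop 0 gamma w (delta j) i).
  by rewrite Lop_Lkernel /delta sum_mul_eq.
by rewrite /Lop lap_delta.
Qed.

Hypothesis w_sym : forall i j, w i j = w j i.

Lemma eqmeasure_setC1 j : eqmeasure 0 w [set~ j] =
  fun k => n%:R * (potential 0 w (delta j) j - potential 0 w (delta j) k).
Proof.
set p := potential 0 w (delta j); set nu := fun k => _.
have [p_lap p_mass] := potentialP (delta j).
have n_neq0 : n%:R != 0 :> R by rewrite pnatr_eq0 gtn_eqF.
have delta_sum : \sum_k delta j k = 1 :> R.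
  by rewrite -[RHS](sum_mul_eq (fun=> 1) j); apply: eq_bigr => k _; rewrite mul1r.
have nu_shift : nu = fun k => - n%:R * p k - - n%:R * p j.
  by apply/funext => k; rewrite /nu; ring.
have nu_eqmeasure : is_eqmeasure 0 w [set~ j] nu.
  split=> k; rewrite in_setC1; last by move=> /negPn/eqP ->; rewrite /nu subrr mulr0.
  move=> k_neq_j.
  rewrite nu_shift lap_subr lapZ p_lap /avg mass0E vol0E delta_sum /delta.
  by rewrite (negbTE k_neq_j) sub0r; field.
apply: (xget_unique _ nu_eqmeasure) => y [y_lap y_zero].
have lap_eq k : k != j -> lap 0 w y k = lap 0 w nu k.
  by move=> k_neq_j; rewrite y_lap ?nu_eqmeasure.1 ?in_setC1.
have {}lap_eq k : lap 0 w y k = lap 0 w nu k.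
  have [->|] := eqVneq k j; last exact: lap_eq.
  (* At j itself, because Delta y and Delta nu both sum to zero over V. *)
  have := sum_lap0 nu w_sym; rewrite (bigD1 j) //=.
  have := sum_lap0 y w_sym; rewrite (bigD1 j) //= (eq_bigr _ lap_eq) => y0 nu0.
  by apply/(addIr (\sum_(k < n | k != j) lap 0 w nu k)); rewrite y0 nu0.
apply/funext => k; apply/subr0_eq.
have -> : y k - nu k = y j - nu j.
  by apply: (@lap_eq0_const (fun k => y k - nu k)) => i; rewrite lapB lap_eq subrr.
by rewrite y_zero ?in_setC1 ?negbK // /nu subrr mulr0 subrr.
Qed.

Lemma fjE j i : fj 0 w j i = - n%:R * potential 0 w (delta j) i.
Proof.
have [_ p_mass] := potentialP (delta j).
have n_neq0 : n%:R != 0 :> R by rewrite pnatr_eq0 gtn_eqF.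
rewrite /fj eqmeasure_setC1 /avg mass0E vol0E -mulr_sumr sumrB sumr_const card_ord.
by rewrite -(mass0E w) p_mass subr0 -mulr_natr; field.
Qed.

Lemma wtilde_offdiag i j : i != j ->
  wtilde 0 gamma w lam phi i j = w i j + gamma / vol 0 w * fj 0 w j i.
Proof.
move=> i_neq_j; have n_neq0 : n%:R != 0 :> R by rewrite pnatr_eq0 gtn_eqF.
by rewrite wtilde_Lkernel // Lkernel_offdiag // fjE vol0E; field.
Qed.

End Spectral.

Lemma inCgamma_is_graph (R : realType) n r gamma (w : weight R n) :
  inCgamma r gamma w -> is_graph w.
Proof. by rewrite /inCgamma; case: eqP => _ // [[]]. Qed.

Lemma inCgamma0_offdiag (R : realType) n gamma (w : weight R n) i j :
  0 <= gamma -> inCgamma 0 gamma w -> i != j ->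
  0 <= w i j + gamma / vol 0 w * fj 0 w j i /\
  (0 < w i j -> 0 < w i j + gamma / vol 0 w * fj 0 w j i).
Proof.
rewrite /inCgamma => gamma_ge0.
case: eqP => [-> [_ _ _ w_ge0 _] _|_ [[_ C0] Cg] i_neq_j].
  by rewrite !mul0r addr0; split.
have := Cg j i i_neq_j; have := C0 j i i_neq_j; rewrite !degr0 invr1 !mul1r.
have c_ge0 : 0 <= gamma / vol 0 w by rewrite divr_ge0 // vol0E ler0n.
move=> w_gt0_or_fj_ge0 [w_eq0|x_gt0]; last by split; [exact: ltW | move=> _].
rewrite w_eq0 ltxx add0r; split=> //.
by case: w_gt0_or_fj_ge0 => [|fj_ge0]; [rewrite w_eq0 ltxx | exact: mulr_ge0].
Qed.

Lemma wtilde_sym (R : realType) n gamma (w : weight R n) lam phi i j :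
  wtilde 0 gamma w lam phi i j = wtilde 0 gamma w lam phi j i.
Proof.
rewrite /wtilde eq_sym; case: eqP => // _; rewrite !degr0 !mul1r.
by congr (- _); apply: eq_bigr => m _; ring.
Qed.

Lemma wtilde_is_graph (R : realType) n gamma (w : weight R n) lam phi :
  0 <= gamma -> inCgamma 0 gamma w -> is_spectral 0 w lam phi ->
  is_graph (wtilde 0 gamma w lam phi).
Proof.
move=> gamma_ge0 wC spec; have [n_ge2 w_sym w_diag _ w_conn] := inCgamma_is_graph wC.
have n_gt0 : (0 < n)%N := ltnW n_ge2.
have wtilde_edge i j : i != j ->
    0 <= wtilde 0 gamma w lam phi i j /\
    (0 < w i j -> 0 < wtilde 0 gamma w lam phi i j).
  move=> i_neq_j; rewrite (wtilde_offdiag spec n_gt0 gamma w_sym) //.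
  exact: inCgamma0_offdiag.
split=> // [i j|i|i j|i j].
- exact: wtilde_sym.
- by rewrite /wtilde eqxx.
- have [->|i_neq_j] := eqVneq i j; first by rewrite /wtilde eqxx.
  exact: (wtilde_edge i j i_neq_j).1.
- apply: connect_sub (w_conn i j) => a b w_ab; apply: connect1.
  have a_neq_b : a != b by apply: contraTneq w_ab => ->; rewrite w_diag ltxx.
  exact: (wtilde_edge a b a_neq_b).2.
Qed.

Unset Implicit Arguments.

Theorem theorem6p15 (R : realType) (n : nat) (gamma : R) (w : weight R n)
    (lam : 'I_n -> R) (phi : 'I_n -> vfun R n) :
  0 <= gamma ->
  inCgamma 0 gamma w ->
  is_spectral 0 w lam phi ->
  is_graph (wtilde 0 gamma w lam phi) /\
  (forall u : vfun R n, lap 0 (wtilde 0 gamma w lam phi) u = Lop 0 gamma w u).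
Proof.
move=> gamma_ge0 wC spec; split; first exact: wtilde_is_graph.
have [n_ge2 _ _ _ _] := inCgamma_is_graph wC.
by move=> u; exact: lap_wtilde spec (ltnW n_ge2) gamma u.
Qed.
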